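(* Let $(\mathcal{S},\mathcal{A},P,r)$ be a weakly communicating MDP with finite state and action spaces ($S,A$ their sizes) and $r\in[0,1]$; fix $\delta\in(0,1)$. For integers $i\ge1$ let $n_i=2^i$, let $\widehat P^{(i)}$ be a transition kernel, $\mathcal{H}_i=\{\gamma:\frac1{1-\gamma}=2^k\text{ for an integer }k,\ \sqrt{n_i}\le\frac1{1-\gamma}\le n_i\}$, and for each $\gamma\in\mathcal{H}_i$ let $\widetilde\pi_{\gamma,i}$ be a policy and $\widetilde V_{\gamma,i}\in\mathbb{R}^{\mathcal{S}}$. Suppose that for all $i\ge1$ and all $\gamma\in\mathcal{H}_i$: $\|V^{\pi^\star_\gamma}_\gamma-\widehat V^{\pi^\star_\gamma}_{\gamma,i}\|_\infty\le\frac{\alpha(\delta,n_i)}{1-\gamma}\sqrt{\frac{\|V^{\pi^\star_\gamma}_\gamma\|_{\mathrm{sp}}+1}{n_i}}$; $\widehat V^{\widetilde\pi_{\gamma,i}}_{\gamma,i}\ge\widehat V^\star_{\gamma,i}-\frac1{n_i}\mathbf 1$; $\|\widetilde V_{\gamma,i}-\widehat V^\star_{\gamma,i}\|_\infty\le\frac1{n_i}$; and $\|\widehat V^{\widetilde\pi_{\gamma,i}}_{\gamma,i}-V^{\widetilde\pi_{\gamma,i}}_\gamma\|_\infty\le\frac{\alpha(\delta,n_i)}{1-\gamma}\sqrt{\frac{\|\widehat V^{\widetilde\pi_{\gamma,i}}_{\gamma,i}\|_{\mathrm{sp}}+1}{n_i}}$. Define $$\widehat U_i(\gamma)=(1-\gamma)\max_s\widetilde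 V_{\gamma,i}(s)+5\frac{1-\gamma}{n_i}+\frac{2\alpha(\delta,n_i)^2}{(1-\gamma)n_i}+4\alpha(\delta,n_i)\sqrt{\frac{\|\widetilde V_{\gamma,i}\|_{\mathrm{sp}}+1+\frac3{n_i}}{n_i}},$$ $$\widehat L_i(\gamma)=(1-\gamma)\min_s\widetilde V_{\gamma,i}(s)-2\frac{1-\gamma}{n_i}-\alpha(\delta,n_i)\sqrt{\frac{\|\widetilde V_{\gamma,i}\|_{\mathrm{sp}}+\frac3{n_i}+1}{n_i}}.$$ Then for all integers $i\ge1$ and all $\gamma\in\mathcal{H}_i$, $\widehat L_i(\gamma)\mathbf 1\le\rho^{\widetilde\pi_{\gamma,i}}\le\rho^\star\le\widehat U_i(\gamma)\mathbf 1$.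
   Context: $V^\pi_\gamma,V^\star_\gamma$: discounted value of $\pi$ and optimal value in $(P,r,\gamma)$, $\pi^\star_\gamma$ an optimal policy; $\widehat V^\pi_{\gamma,i},\widehat V^\star_{\gamma,i}$: same in $(\widehat P^{(i)},r,\gamma)$. Gain $\rho^\pi(s)=\lim_T\frac1T\mathbb{E}^\pi_s[\sum_{t<T}r(S_t,A_t)]$, $\rho^\star=\sup_\pi\rho^\pi$. $\|x\|_{\mathrm{sp}}=\max x-\min x$. $\alpha(\tilde\delta,\tilde n)=96\sqrt{\log(24SA\tilde n^5/\tilde\delta)}\log_2(\log_2(\tilde n+4))$. Weakly communicating: states split into a set transient under every stationary policy and a communicating set. *)

From HB Require Import structures.
From mathcomp Require Import all_boot all_order all_algebra.
From mathcomp Require Import all_classical all_reals all_analysis.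
Set Implicit Arguments. Unset Strict Implicit. Unset Printing Implicit Defensive.
Import Order.TTheory GRing.Theory Num.Theory.
Import numFieldNormedType.Exports.
Local Open Scope classical_set_scope.
Local Open Scope ring_scope.

Section MDP.
Variables (R : realType) (S A : finType).

Definition is_kernel (P : S -> A -> S -> R) :=
  forall s a, (forall s', 0 <= P s a s') /\ \sum_(s' : S) P s a s' = 1.

(* general (history-dependent, randomized) policy:
   pi h s a = probability of action a in current state s after history h *)
Definition policy := seq (S * A) -> S -> A -> R.
Definition is_policy (pi : policy) :=
  forall h s, (forall a, 0 <= pi h s a) /\ \sum_(a : A) pi h s a = 1.

Definition stat (p : S -> A -> R) : policy := fun _ s a => p s a.
Definition is_stat_policy (p : S -> A -> R) :=
  forall s, (forall a, 0 <= p s a) /\ \sum_(a : A) p s a = 1.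

(* E^pi_s [ sum_{t<T} g^t r(S_t,A_t) ], the history being h *)
Fixpoint ret (P : S -> A -> S -> R) (r : S -> A -> R) (g : R) (pi : policy)
    (T : nat) (h : seq (S * A)) (s : S) : R :=
  match T with
  | 0 => 0
  | T'.+1 => \sum_(a : A) pi h s a *
       (r s a + g * \sum_(s' : S) P s a s' * ret P r g pi T' (rcons h (s, a)) s')
  end.

Definition Vpi P r (g : R) (pi : policy) (s : S) : R :=
  limn (fun T => ret P r g pi T [::] s).

Definition Vstar P r (g : R) (s : S) : R :=
  sup [set Vpi P r g pi s | pi in is_policy].

(* gain rho^pi(s) = lim_T (1/T) E[sum_{t<T} r]; taken as limsup so that it is
   defined for every policy (it is a genuine limit for stationary policies) *)
Definition gain P r (pi : policy) (s : S) : R :=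
  limn_sup (fun T => (T%:R)^-1 * ret P r 1 pi T [::] s).

Definition rhostar P r (s : S) : R :=
  sup [set gain P r pi s | pi in is_policy].

Definition supnorm (x : S -> R) : R := \big[Num.max/0]_(s : S) `|x s|.
Definition vmax (x : S -> R) : R := sup (range x).
Definition vmin (x : S -> R) : R := inf (range x).
Definition spnorm (x : S -> R) : R := vmax x - vmin x.

(* weakly communicating, w.r.t. deterministic stationary policies d : S -> A *)
Fixpoint nstep (P : S -> A -> S -> R) (d : S -> A) (n : nat) (s s' : S) : R :=
  match n with
  | 0 => (s == s')%:R
  | n'.+1 => \sum_(y : S) P s (d s) y * nstep P d n' y s'
  end.
Definition accessible P d (s s' : S) := exists n, 0 < nstep P d n s s'.

(* probability, starting from x, of visiting s at some time in 1..n *)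
Fixpoint hitp (P : S -> A -> S -> R) (d : S -> A) (s : S) (n : nat) (x : S) : R :=
  match n with
  | 0 => 0
  | n'.+1 => P x (d x) s + \sum_(y : S | y != s) P x (d x) y * hitp P d s n' y
  end.
Definition transient P d (s : S) := limn (fun n => hitp P d s n s) < 1.

Definition weakly_communicating (P : S -> A -> S -> R) :=
  exists C : {set S},
    (forall s s', s \in C -> s' \in C -> exists d, accessible P d s s') /\
    (forall s, s \notin C -> forall d, transient P d s).

End MDP.

Definition log2 {R : realType} (x : R) : R := ln x / ln 2.

Definition alpha {R : realType} (nS nA : nat) (delta n : R) : R :=
  96 * Num.sqrt (ln (24 * nS%:R * nA%:R * n ^+ 5 / delta)) * log2 (log2 (n + 4)).

Definition Hset {R : realType} (i : nat) (g : R) :=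
  exists k : nat, (1 - g)^-1 = 2 ^+ k /\
    Num.sqrt (2 ^+ i : R) <= 2 ^+ k /\ (2 ^+ k : R) <= 2 ^+ i.

From HB Require Import structures.
From mathcomp Require Import all_boot all_order all_algebra.
From mathcomp Require Import all_classical all_reals all_analysis.
From mathcomp Require Import ring lra.
Set Implicit Arguments. Unset Strict Implicit. Unset Printing Implicit Defensive.
Import Order.TTheory GRing.Theory Num.Theory.
Import numFieldNormedType.Exports.
Local Open Scope classical_set_scope.
Local Open Scope ring_scope.

(* The optimal discounted value V* is superharmonic,
   r(s,a) + g (P V* )(s,a) <= V*(s) for every action a, so telescoping bounds the
   T-step undiscounted return of any policy by V*(s) - min V* + T (1-g) max V*:
   every gain, hence rho*, is at most (1-g) max V*. Dually, the Bellman equation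
   of the stationary policy pitil gives gain >= (1-g) min V^pitil. The accuracy
   hypotheses place min V^pitil and max V* within explicit errors of Vtil. The
   error for V* involves the unknown span of V*, which is itself at most the span
   of Vtil plus that same error; solving this self-referential inequality
   (sqrt_le_self_bound) eliminates it. *)

Section Extrema.
Variables (R : realType) (S : finType).
Implicit Types (x : S -> R) (s : S).

Lemma normr_le_supnorm x s : `|x s| <= supnorm x.
Proof. by rewrite /supnorm (bigD1 s) //= le_max lexx. Qed.

Lemma vmax_ub x s : x s <= vmax x.
Proof.
apply: ub_le_sup; last by exists s.
by exists (supnorm x) => _ [t _ <-]; exact: le_trans (ler_norm _) (normr_le_supnorm x t).
Qed.

Lemma vmin_lb x s : vmin x <= x s.
Proof.
apply: ge_inf; last by exists s.
exists (- supnorm x) => _ [t _ <-]; rewrite lerNl.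
by apply: le_trans (normr_le_supnorm x t); rewrite -normrN ler_norm.
Qed.

Lemma vmax_le x B s : (forall t, x t <= B) -> vmax x <= B.
Proof. by move=> xB; apply: ge_sup; [exists (x s), s | move=> _ [t _ <-]]. Qed.

Lemma vmin_ge x B s : (forall t, B <= x t) -> B <= vmin x.
Proof. by move=> Bx; apply: lb_le_inf; [exists (x s), s | move=> _ [t _ <-]]. Qed.

Lemma spnorm_ge0 x s : 0 <= spnorm x.
Proof. by rewrite subr_ge0 (le_trans (vmin_lb x s) (vmax_ub x s)). Qed.

Lemma spnorm_le x m M s : (forall t, m <= x t <= M) -> spnorm x <= M - m.
Proof.
move=> xmM; apply: lerB.
- by apply: vmax_le s _ => t; case/andP: (xmM t).
- by apply: vmin_ge s _ => t; case/andP: (xmM t).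
Qed.

End Extrema.

Section Averages.
Variables (R : realType) (S A : finType).

Lemma policy_ge0 (pi : policy R S A) h s a : is_policy pi -> 0 <= pi h s a.
Proof. by move=> hpi; case: (hpi h s). Qed.

Lemma policy_sum_const (pi : policy R S A) h s c : is_policy pi ->
  \sum_(a : A) pi h s a * c = c.
Proof. by move=> hpi; rewrite -mulr_suml (proj2 (hpi h s)) mul1r. Qed.

Lemma ler_policy_sum (pi : policy R S A) h s (F G : A -> R) : is_policy pi ->
  (forall a, F a <= G a) -> \sum_(a : A) pi h s a * F a <= \sum_(a : A) pi h s a * G a.
Proof. by move=> hpi FG; apply: ler_sum => a _; rewrite ler_wpM2l ?policy_ge0. Qed.

Lemma stat_policy (p : S -> A -> R) : is_stat_policy p -> is_policy (stat p).
Proof. by move=> hp h s; apply: hp. Qed.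

Variable P : S -> A -> S -> R.
Hypothesis hP : is_kernel P.

Lemma kernel_ge0 s a s' : 0 <= P s a s'.
Proof. by case: (hP s a). Qed.

Lemma kernel_sum_const s a c : \sum_(s' : S) P s a s' * c = c.
Proof. by rewrite -mulr_suml (proj2 (hP s a)) mul1r. Qed.

Lemma kernel_sumDr s a (W : S -> R) c :
  \sum_(s' : S) P s a s' * (W s' + c) = \sum_(s' : S) P s a s' * W s' + c.
Proof. by under eq_bigr do rewrite mulrDr; rewrite big_split /= kernel_sum_const. Qed.

Lemma ler_kernel_sum s a (W W' : S -> R) : (forall t, W t <= W' t) ->
  \sum_(s' : S) P s a s' * W s' <= \sum_(s' : S) P s a s' * W' s'.
Proof. by move=> WW'; apply: ler_sum => s' _; rewrite ler_wpM2l ?kernel_ge0. Qed.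

Lemma kernel_sum_vmax s a (W : S -> R) : \sum_(s' : S) P s a s' * W s' <= vmax W.
Proof. by rewrite -[leRHS](kernel_sum_const s a); apply: ler_kernel_sum => t; exact: vmax_ub. Qed.

Lemma kernel_sum_vmin s a (W : S -> R) : vmin W <= \sum_(s' : S) P s a s' * W s'.
Proof. by rewrite -[leLHS](kernel_sum_const s a); apply: ler_kernel_sum => t; exact: vmin_lb. Qed.

End Averages.

Lemma geometric_sum_le (R : numFieldType) (g : R) T :
  0 <= g < 1 -> \sum_(k < T) g ^+ k <= (1 - g)^-1.
Proof.
case/andP=> g0 g1; have g1' : 0 < 1 - g by rewrite subr_gt0.
rewrite -[leRHS]mul1r ler_pdivlMr // mulrC -opprB mulNr -subrX1 opprB lerBlDr lerDl.
exact: exprn_ge0.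
Qed.

Section DiscountedValues.
Variables (R : realType) (S A : finType) (P : S -> A -> S -> R) (r : S -> A -> R).
Hypotheses (hP : is_kernel P) (hr : forall s a, 0 <= r s a <= 1).

Let r_ge0 s a : 0 <= r s a. Proof. by case/andP: (hr s a). Qed.
Let r_le1 s a : r s a <= 1. Proof. by case/andP: (hr s a). Qed.

Lemma ret_ge0 g pi T h s : 0 <= g -> is_policy pi -> 0 <= ret P r g pi T h s.
Proof.
move=> g0 hpi; elim: T h s => [|T IH] h s //=.
apply: sumr_ge0 => a _; rewrite mulr_ge0 ?policy_ge0 ?addr_ge0 ?mulr_ge0 //.
by apply: sumr_ge0 => s' _; rewrite mulr_ge0 ?kernel_ge0.
Qed.

Lemma ret_le_geometric g pi T h s : 0 <= g -> is_policy pi ->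
  ret P r g pi T h s <= \sum_(k < T) g ^+ k.
Proof.
move=> g0 hpi; elim: T h s => [|T IH] h s /=; first by rewrite big_ord0.
rewrite big_ord_recl expr0 -[leRHS](policy_sum_const h s _ hpi).
apply: ler_policy_sum => // a; apply: lerD; first exact: r_le1.
under [X in _ <= X]eq_bigr do rewrite exprS.
rewrite -mulr_sumr ler_wpM2l // -[leRHS](kernel_sum_const hP s a).
exact: ler_kernel_sum.
Qed.

Lemma ret_le_inv g pi T h s : 0 <= g < 1 -> is_policy pi ->
  ret P r g pi T h s <= (1 - g)^-1.
Proof.
move=> /[dup] g01 /andP[g0 _] hpi.
exact: le_trans (ret_le_geometric T h s g0 hpi) (geometric_sum_le T g01).
Qed.

Lemma ret_nondecreasing g pi T h s : 0 <= g -> is_policy pi ->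
  ret P r g pi T h s <= ret P r g pi T.+1 h s.
Proof.
move=> g0 hpi; elim: T h s => [|T IH] h s; first exact: ret_ge0.
apply: ler_policy_sum => // a; rewrite lerD2l ler_wpM2l //.
exact: ler_kernel_sum.
Qed.

Lemma ret_cvg g pi h s : 0 <= g < 1 -> is_policy pi -> cvgn (fun T => ret P r g pi T h s).
Proof.
move=> /[dup] g01 /andP[g0 _] hpi; apply: nondecreasing_is_cvgn.
  by apply/nondecreasing_seqP => T; exact: ret_nondecreasing.
by exists (1 - g)^-1 => _ [T _ <-]; exact: ret_le_inv.
Qed.

Lemma Vpi_le_inv g pi s : 0 <= g < 1 -> is_policy pi -> Vpi P r g pi s <= (1 - g)^-1.
Proof.
move=> g01 hpi; apply: limr_le; first exact: ret_cvg.
by apply: nearW => T; exact: ret_le_inv.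
Qed.

Lemma Vpi_le_Vstar g pi s : 0 <= g < 1 -> is_policy pi -> Vpi P r g pi s <= Vstar P r g s.
Proof.
move=> g01 hpi; apply: ub_le_sup; last by exists pi.
by exists (1 - g)^-1 => _ [p hp <-]; exact: Vpi_le_inv.
Qed.

Lemma ret_stat_nil (p : S -> A -> R) g T h s :
  ret P r g (stat p) T h s = ret P r g (stat p) T [::] s.
Proof.
elim: T h s => [|T IH] h s //=.
apply: eq_bigr => a _; congr (_ * (_ + _ * _)); apply: eq_bigr => s' _.
by rewrite IH (IH (rcons [::] (s, a))).
Qed.

Lemma eq_ret_nonnil (pi1 pi2 : policy R S A) g :
  (forall h, h != [::] -> pi1 h = pi2 h) ->
  forall T h s, h != [::] -> ret P r g pi1 T h s = ret P r g pi2 T h s.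
Proof.
move=> pi12; elim=> [|T IH] h s hn //=.
rewrite pi12 //; apply: eq_bigr => a _; congr (_ * (_ + _ * _)).
by apply: eq_bigr => s' _; rewrite IH //; case: (h).
Qed.

Lemma cvg_ret_lookahead (p : S -> A -> R) g s a : 0 <= g < 1 -> is_stat_policy p ->
  (fun T => r s a + g * \sum_(s' : S) P s a s' * ret P r g (stat p) T [::] s') @ \oo
   --> r s a + g * \sum_(s' : S) P s a s' * Vpi P r g (stat p) s'.
Proof.
move=> g01 hp; apply: cvgD; first exact: cvg_cst.
apply: cvgMl_tmp; apply: (@cvg_big _ _ +%R 0 xpredT add_continuous) => // s' _.
by apply: cvgMl_tmp; apply: ret_cvg => //; exact: stat_policy.
Qed.

Lemma Vpi_stat_bellman (p : S -> A -> R) g s : 0 <= g < 1 -> is_stat_policy p ->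
  Vpi P r g (stat p) s =
  \sum_(a : A) p s a * (r s a + g * \sum_(s' : S) P s a s' * Vpi P r g (stat p) s').
Proof.
move=> g01 hp; apply: cvg_lim => //; rewrite -cvg_shiftS /=.
under eq_fun do under eq_bigr do under eq_bigr do rewrite ret_stat_nil.
apply: (@cvg_big _ _ +%R 0 xpredT add_continuous) => // a _.
by apply: cvgMl_tmp; exact: cvg_ret_lookahead.
Qed.

Definition first_action (p : S -> A -> R) (a : A) : policy R S A :=
  fun h s a' => if h is [::] then (a' == a)%:R else p s a'.

Lemma first_action_policy p a : is_stat_policy p -> is_policy (first_action p a).
Proof.
move=> hp [|x h] s /=; last exact: hp.
split=> [a'|]; first by rewrite ler0n.
by rewrite (bigD1 a) //= eqxx big1 ?addr0 // => a' /negbTE ->.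
Qed.

Lemma ret_first_action (p : S -> A -> R) a g T s :
  ret P r g (first_action p a) T.+1 [::] s =
  r s a + g * \sum_(s' : S) P s a s' * ret P r g (stat p) T [::] s'.
Proof.
rewrite /= (bigD1 a) //= eqxx mul1r [X in _ + X]big1 ?addr0; last first.
  by move=> a' /negbTE ->; rewrite mul0r.
congr (_ + _ * _); apply: eq_bigr => s' _.
by rewrite (@eq_ret_nonnil _ (stat p)) ?ret_stat_nil //; case.
Qed.

Lemma lookahead_le_Vstar (p : S -> A -> R) g s a : 0 <= g < 1 -> is_stat_policy p ->
  r s a + g * \sum_(s' : S) P s a s' * Vpi P r g (stat p) s' <= Vstar P r g s.
Proof.
move=> g01 hp.
suff <- : Vpi P r g (first_action p a) s =
          r s a + g * \sum_(s' : S) P s a s' * Vpi P r g (stat p) s'.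
  by apply: Vpi_le_Vstar => //; exact: first_action_policy.
apply: cvg_lim => //; rewrite -cvg_shiftS.
under eq_fun do rewrite ret_first_action.
exact: cvg_ret_lookahead.
Qed.

End DiscountedValues.

Section LimnSupBounds.
Variable R : realType.
Implicit Types u v : R^nat.

Lemma le_limn_sup u v : bounded_fun u -> bounded_fun v ->
  (\forall n \near \oo, u n <= v n) -> limn_sup u <= limn_sup v.
Proof.
have cvg_sups w : bounded_fun w -> cvgn (sups w).
  move=> bw; apply: nonincreasing_is_cvgn; last exact: bounded_fun_has_lbound_sups.
  exact/nonincreasing_sups/bounded_fun_has_ubound.
move=> bu bv [N _ uv]; apply: ler_lim; [exact: cvg_sups | exact: cvg_sups |].
near=> n; have Nn : (N <= n)%N by near: n; exists N.
apply: ge_sup; first by exists (u n), n => /=.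
move=> _ [m /= nm <-]; apply: le_trans (uv m (leq_trans Nn nm)) _.
by apply: ub_le_sup; [exact/has_ubound_sdrop/bounded_fun_has_ubound | exists m].
Unshelve. all: by end_near. Qed.

Lemma limn_sup_le_cvg u v l : bounded_fun u -> v @ \oo --> l ->
  (\forall n \near \oo, u n <= v n) -> limn_sup u <= l.
Proof.
move=> bu vl uv; rewrite -(cvg_limn_inf_sup vl).2.
by apply: le_limn_sup => //; exact/cvg_seq_bounded/cvgP/vl.
Qed.

Lemma limn_sup_ge_cvg u v l : bounded_fun u -> v @ \oo --> l ->
  (\forall n \near \oo, v n <= u n) -> l <= limn_sup u.
Proof.
move=> bu vl vu; rewrite -(cvg_limn_inf_sup vl).2.
by apply: le_limn_sup => //; exact/cvg_seq_bounded/cvgP/vl.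
Qed.

Lemma cvg_add_divn (c d : R) : (fun n => c + d / n%:R) @ \oo --> c.
Proof.
rewrite -[c in _ --> c]addr0; apply: cvgD; first exact: cvg_cst.
rewrite -(mulr0 d); apply: cvgMl_tmp.
by rewrite -cvg_shiftS; exact: cvg_harmonic.
Qed.

End LimnSupBounds.

Section Gains.
Variables (R : realType) (S A : finType) (P : S -> A -> S -> R) (r : S -> A -> R).
Hypotheses (hP : is_kernel P) (hr : forall s a, 0 <= r s a <= 1).

Lemma avg_ret_ge0 (pi : policy R S A) s T : is_policy pi ->
  0 <= T%:R^-1 * ret P r 1 pi T [::] s.
Proof. by move=> hpi; rewrite mulr_ge0 ?invr_ge0 ?ret_ge0. Qed.

Lemma avg_ret_le1 (pi : policy R S A) s T : is_policy pi ->
  T%:R^-1 * ret P r 1 pi T [::] s <= 1.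
Proof.
move=> hpi; case: T => [|T]; first by rewrite invr0 mul0r.
rewrite ler_pdivrMl ?ltr0Sn // mulr1.
have := ret_le_geometric hP hr T.+1 [::] s ler01 hpi.
by under eq_bigr do rewrite expr1n; rewrite sumr_const card_ord.
Qed.

Lemma avg_ret_bounded (pi : policy R S A) s : is_policy pi ->
  bounded_fun (fun T => T%:R^-1 * ret P r 1 pi T [::] s).
Proof.
move=> hpi; exists 1; split; first exact: num_real.
move=> M M1 T _; apply: le_trans (ltW M1).
by rewrite /= ger0_norm ?avg_ret_ge0 ?avg_ret_le1.
Qed.

Lemma gain_le1 (pi : policy R S A) s : is_policy pi -> gain P r pi s <= 1.
Proof.
move=> hpi; apply: (@limn_sup_le_cvg _ _ (fun=> 1)); first exact: avg_ret_bounded.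
  exact: cvg_cst.
by apply: nearW => T; exact: avg_ret_le1.
Qed.

Lemma gain_le_rhostar (pi : policy R S A) s : is_policy pi -> gain P r pi s <= rhostar P r s.
Proof.
move=> hpi; apply: ub_le_sup; last by exists pi.
by exists 1 => _ [p hp <-]; exact: gain_le1.
Qed.

Lemma ret1_le_superharmonic (pi : policy R S A) (W : S -> R) g :
  g <= 1 -> (forall s a, r s a + g * \sum_(s' : S) P s a s' * W s' <= W s) ->
  is_policy pi ->
  forall T h s, ret P r 1 pi T h s <= W s - vmin W + T%:R * ((1 - g) * vmax W).
Proof.
move=> g1 Wsup hpi; elim=> [|T IH] h s /=.
  by rewrite mul0r addr0 subr_ge0 vmin_lb.
set c := (1 - g) * vmax W; set K := - vmin W + T%:R * c.
rewrite -[leRHS](policy_sum_const h s _ hpi); apply: ler_policy_sum => // a.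
have ret_le : \sum_(s' : S) P s a s' * ret P r 1 pi T (rcons h (s, a)) s' <=
              \sum_(s' : S) P s a s' * W s' + K.
  by rewrite -(kernel_sumDr hP); apply: (ler_kernel_sum hP) => s'; rewrite /K /c addrA IH.
have avg_le : (1 - g) * \sum_(s' : S) P s a s' * W s' <= c.
  by rewrite ler_wpM2l ?subr_ge0 ?kernel_sum_vmax.
have := Wsup s a; move: ret_le; rewrite /K -natr1 mulrDl !mul1r; lra.
Qed.

Lemma ret1_ge_harmonic (p : S -> A -> R) (W : S -> R) g :
  g <= 1 -> is_stat_policy p ->
  (forall s, W s = \sum_(a : A) p s a * (r s a + g * \sum_(s' : S) P s a s' * W s')) ->
  forall T h s, W s - vmax W + T%:R * ((1 - g) * vmin W) <= ret P r 1 (stat p) T h s.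
Proof.
move=> g1 hp Wbell; have hpi := stat_policy hp.
elim=> [|T IH] h s /=.
  by rewrite mul0r addr0 subr_le0 vmax_ub.
set c := (1 - g) * vmin W; set K := - vmax W + T%:R * c.
have -> : W s - vmax W + T.+1%:R * c =
          \sum_(a : A) stat p h s a * (r s a + g * \sum_(s' : S) P s a s' * W s' + (c + K)).
  under eq_bigr do rewrite mulrDr.
  by rewrite big_split /= -Wbell (policy_sum_const h s _ hpi) /K -natr1; ring.
apply: ler_policy_sum => // a.
have ret_ge : \sum_(s' : S) P s a s' * W s' + K <=
              \sum_(s' : S) P s a s' * ret P r 1 (stat p) T (rcons h (s, a)) s'.
  by rewrite -(kernel_sumDr hP); apply: (ler_kernel_sum hP) => s'; rewrite /K /c addrA IH.
have avg_ge : c <= (1 - g) * \sum_(s' : S) P s a s' * W s'.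
  by rewrite ler_wpM2l ?subr_ge0 ?kernel_sum_vmin.
move: ret_ge; rewrite /K mul1r; lra.
Qed.

Lemma gain_le_superharmonic (pi : policy R S A) (W : S -> R) g s :
  g <= 1 -> (forall s a, r s a + g * \sum_(s' : S) P s a s' * W s' <= W s) ->
  is_policy pi -> gain P r pi s <= (1 - g) * vmax W.
Proof.
move=> g1 Wsup hpi.
apply: (@limn_sup_le_cvg _ _ (fun T => (1 - g) * vmax W + (W s - vmin W) / T%:R)).
- exact: avg_ret_bounded.
- exact: cvg_add_divn.
near=> T; have T0 : (0 < T)%N by near: T; exists 1%N.
rewrite ler_pdivrMl ?ltr0n // mulrDr [X in _ + X]mulrCA mulfV ?pnatr_eq0 -?lt0n // mulr1.
have := ret1_le_superharmonic g1 Wsup hpi T [::] s; lra.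
Unshelve. all: by end_near. Qed.

Lemma gain_stat_ge_harmonic (p : S -> A -> R) (W : S -> R) g s :
  g <= 1 -> is_stat_policy p ->
  (forall s, W s = \sum_(a : A) p s a * (r s a + g * \sum_(s' : S) P s a s' * W s')) ->
  (1 - g) * vmin W <= gain P r (stat p) s.
Proof.
move=> g1 hp Wbell.
apply: (@limn_sup_ge_cvg _ _ (fun T => (1 - g) * vmin W - (vmax W - W s) / T%:R)).
- exact/avg_ret_bounded/stat_policy.
- by under eq_fun do rewrite -mulNr; exact: cvg_add_divn.
near=> T; have T0 : (0 < T)%N by near: T; exists 1%N.
rewrite ler_pdivlMl ?ltr0n // mulrBr [X in _ - X]mulrCA mulfV ?pnatr_eq0 -?lt0n // mulr1.
have := ret1_ge_harmonic g1 hp Wbell T [::] s; lra.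
Unshelve. all: by end_near. Qed.

End Gains.

Section OptimalGains.
Variables (R : realType) (S A : finType) (P : S -> A -> S -> R) (r : S -> A -> R).
Hypotheses (hP : is_kernel P) (hr : forall s a, 0 <= r s a <= 1).
Variables (g : R) (p : S -> A -> R).
Hypotheses (g01 : 0 <= g < 1) (hp : is_stat_policy p).

Let g_le1 : g <= 1. Proof. by case/andP: g01 => _ /ltW. Qed.

Lemma gain_stat_ge_vmin s : (1 - g) * vmin (Vpi P r g (stat p)) <= gain P r (stat p) s.
Proof.
by apply: (gain_stat_ge_harmonic hP hr) => // t; exact: Vpi_stat_bellman.
Qed.

Hypothesis p_opt : forall s, Vpi P r g (stat p) s = Vstar P r g s.

Lemma gain_le_optimal (pi : policy R S A) s : is_policy pi ->
  gain P r pi s <= (1 - g) * vmax (Vpi P r g (stat p)).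
Proof.
apply: (gain_le_superharmonic hP hr) => // t a.
by rewrite p_opt; exact: lookahead_le_Vstar.
Qed.

Lemma rhostar_le_optimal s : rhostar P r s <= (1 - g) * vmax (Vpi P r g (stat p)).
Proof.
apply: ge_sup; first by exists (gain P r (stat p) s), (stat p); first exact: stat_policy.
by move=> _ [pi hpi <-]; exact: gain_le_optimal.
Qed.

End OptimalGains.

Lemma sqrt_le_self_bound (R : rcfType) (q X Z : R) : 0 <= q -> 0 <= X ->
  Z <= X + Num.sqrt (q * Z) + Num.sqrt (q * X) ->
  Num.sqrt (q * Z) <= q + Num.sqrt (q * X).
Proof.
move=> q0 X0 hZ; set y := Num.sqrt (q * Z) in hZ *; set b := Num.sqrt (q * X) in hZ *.
have b0 : 0 <= b by exact: sqrtr_ge0.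
have [Z_lt0|Z0] := ltP Z 0.
  by rewrite /y ler0_sqrtr ?addr_ge0 // mulr_ge0_le0 // ltW.
have y0 : 0 <= y by exact: sqrtr_ge0.
have y2 : y ^+ 2 = q * Z by rewrite sqr_sqrtr ?mulr_ge0.
have b2 : b ^+ 2 = q * X by rewrite sqr_sqrtr ?mulr_ge0.
have : y ^+ 2 <= b ^+ 2 + q * y + q * b by rewrite y2 b2; have := ler_wpM2l q0 hZ; lra.
nra.
Qed.

Lemma mulr_sqrt_div (R : rcfType) (c x n : R) : 0 <= c ->
  c * Num.sqrt (x / n) = Num.sqrt (c ^+ 2 / n * x).
Proof.
move=> c0; have -> : c ^+ 2 / n * x = c ^+ 2 * (x / n) by ring.
by rewrite [in RHS]sqrtrM ?sqr_ge0 // sqrtr_sqr ger0_norm.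
Qed.

Section ValueComparison.
Variables (R : realType) (S : finType) (s0 : S) (n c : R) (Vtil Vopt : S -> R).
Hypotheses (n_gt0 : 0 < n) (c_ge0 : 0 <= c)
  (Vtil_close : supnorm (fun s => Vtil s - Vopt s) <= n^-1).

Let Vtil_close_at s : `|Vtil s - Vopt s| <= n^-1.
Proof. exact: le_trans (normr_le_supnorm _ s) Vtil_close. Qed.

Lemma dominated_le_vmax (V : S -> R) s : (forall t, V t <= Vopt t) ->
  V s <= vmax Vtil + n^-1.
Proof.
move=> V_le; have := Vtil_close_at s; have := vmax_ub Vtil s; have := V_le s.
rewrite ler_norml; lra.
Qed.

Lemma near_optimal_ge_vmin (V : S -> R) s : (forall t, Vopt t - n^-1 <= V t) ->
  vmin Vtil - 2 / n <= V s.
Proof.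
move=> V_ge; have := Vtil_close_at s; have := vmin_lb Vtil s; have := V_ge s.
rewrite ler_norml; lra.
Qed.

Lemma near_optimal_spnorm (V : S -> R) :
  (forall t, V t <= Vopt t) -> (forall t, Vopt t - n^-1 <= V t) ->
  spnorm V <= spnorm Vtil + 3 / n.
Proof.
move=> V_le V_ge.
have V_bounds t : vmin Vtil - 2 / n <= V t <= vmax Vtil + n^-1.
  by rewrite near_optimal_ge_vmin ?dominated_le_vmax.
by have := spnorm_le s0 V_bounds; rewrite /spnorm; lra.
Qed.

Let span_bound_ge0 : 0 <= spnorm Vtil + 3 / n + 1.
Proof. by rewrite addr_ge0 // addr_ge0 ?(spnorm_ge0 _ s0) // divr_ge0 // ltW. Qed.

Lemma evaluated_ge_vmin (V W : S -> R) s :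
  (forall t, V t <= Vopt t) -> (forall t, Vopt t - n^-1 <= V t) ->
  supnorm (fun t => V t - W t) <= c * Num.sqrt ((spnorm V + 1) / n) ->
  vmin Vtil - 2 / n - c * Num.sqrt ((spnorm Vtil + 3 / n + 1) / n) <= W s.
Proof.
move=> V_le V_ge VW.
have width_le : c * Num.sqrt ((spnorm V + 1) / n) <=
                c * Num.sqrt ((spnorm Vtil + 3 / n + 1) / n).
  apply: ler_wpM2l => //; rewrite ler_sqrt; last first.
    exact: divr_ge0 span_bound_ge0 (ltW n_gt0).
  by rewrite ler_pM2r ?invr_gt0 // lerD2r near_optimal_spnorm.
have := le_trans (normr_le_supnorm _ s) VW; have := near_optimal_ge_vmin s V_ge.
rewrite ler_norml; lra.
Qed.

Lemma optimal_le_vmax (Vs Vh : S -> R) s :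
  (forall t, Vh t <= Vopt t) ->
  supnorm (fun t => Vs t - Vh t) <= c * Num.sqrt ((spnorm Vs + 1) / n) ->
  (forall t, vmin Vtil - 2 / n - c * Num.sqrt ((spnorm Vtil + 3 / n + 1) / n) <= Vs t) ->
  Vs s <= vmax Vtil + n^-1 + c ^+ 2 / n + c * Num.sqrt ((spnorm Vtil + 3 / n + 1) / n).
Proof.
move=> Vh_le Vs_close Vs_ge.
set X := spnorm Vtil + 3 / n + 1 in Vs_ge *.
set e := c * Num.sqrt ((spnorm Vs + 1) / n) in Vs_close *.
have Vs_le t : Vs t <= vmax Vtil + n^-1 + e.
  have := le_trans (normr_le_supnorm _ t) Vs_close; have := dominated_le_vmax t Vh_le.
  rewrite ler_norml; lra.
have span_le : spnorm Vs + 1 <= X + e + c * Num.sqrt (X / n).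
  have Vs_bounds t : vmin Vtil - 2 / n - c * Num.sqrt (X / n) <= Vs t <= vmax Vtil + n^-1 + e.
    by rewrite Vs_ge Vs_le.
  by have := spnorm_le s0 Vs_bounds; rewrite /X /spnorm; lra.
have e_le : e <= c ^+ 2 / n + c * Num.sqrt (X / n).
  rewrite /e !mulr_sqrt_div //; apply: sqrt_le_self_bound.
  - by rewrite divr_ge0 ?sqr_ge0 ?ltW.
  - exact: span_bound_ge0.
  - by rewrite -!mulr_sqrt_div.
by have := Vs_le s; lra.
Qed.

End ValueComparison.

Lemma Hset_discount (R : realType) i (g : R) : Hset i g -> 0 <= g < 1.
Proof.
case=> k [k_def _]; have k_gt0 : (0 : R) < 2 ^+ k by rewrite exprn_gt0.
have gE : 1 - g = (2 ^+ k)^-1 by rewrite -k_def invrK.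
have : 0 < 1 - g by rewrite gE invr_gt0.
have : 1 - g <= 1 by rewrite gE invf_le1 // exprn_ege1 // ler1n.
by move=> ? ?; apply/andP; split; lra.
Qed.

Lemma alpha_ge0 (R : realType) nS nA (delta n : R) : 0 <= n -> 0 <= alpha nS nA delta n.
Proof.
move=> n_ge0; have ln2_gt0 : (0 : R) < ln 2 by rewrite ln_gt0 // ltr1n.
rewrite /alpha /log2 !mulr_ge0 ?sqrtr_ge0 ?invr_ge0 ?(ltW ln2_gt0) //.
by rewrite ln_ge0 // ler_pdivlMr // mul1r ler_ln ?posrE //; lra.
Qed.

Lemma discounted_lower_scale (R : realFieldType) (g al m x n : R) : g < 1 ->
  (1 - g) * (m - 2 / n - al / (1 - g) * x) = (1 - g) * m - 2 * (1 - g) / n - al * x.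
Proof.
move=> g1; have alE : (1 - g) * (al / (1 - g)) = al.
  by rewrite mulrC divfK // subr_eq0 eq_sym lt_eqF.
by rewrite -[in RHS]alE; ring.
Qed.

Lemma discounted_upper_scale (R : realFieldType) (g al M x n : R) :
  g < 1 -> 0 < n -> 0 <= al -> 0 <= x ->
  (1 - g) * (M + n^-1 + (al / (1 - g)) ^+ 2 / n + al / (1 - g) * x) <=
  (1 - g) * M + 5 * (1 - g) / n + 2 * al ^+ 2 / ((1 - g) * n) + 4 * al * x.
Proof.
move=> g1 n_gt0 al_ge0 x_ge0; have g1' : 0 < 1 - g by rewrite subr_gt0.
have -> : (1 - g) * (M + n^-1 + (al / (1 - g)) ^+ 2 / n + al / (1 - g) * x) =
          (1 - g) * M + (1 - g) / n + al ^+ 2 / ((1 - g) * n) + al * x.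
  by field; rewrite !gt_eqF.
have : 0 <= (1 - g) / n by rewrite divr_ge0 ?ltW.
have : 0 <= al ^+ 2 / ((1 - g) * n) by rewrite divr_ge0 ?sqr_ge0 ?mulr_ge0 ?ltW.
have : 0 <= al * x by rewrite mulr_ge0.
lra.
Qed.

Theorem lemma9 (R : realType) (S A : finType)
  (P : S -> A -> S -> R) (r : S -> A -> R) (delta : R)
  (Phat : nat -> S -> A -> S -> R)
  (pistar : R -> S -> A -> R)
  (pitil : nat -> R -> S -> A -> R)
  (Vtil : nat -> R -> S -> R) :
  is_kernel P -> weakly_communicating P ->
  (forall s a, 0 <= r s a <= 1) ->
  0 < delta < 1 ->
  (forall i, is_kernel (Phat i)) ->
  (forall i g, (1 <= i)%N -> Hset i g ->
     is_stat_policy (pistar g) /\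
     (forall s, Vpi P r g (stat (pistar g)) s = Vstar P r g s)) ->
  (forall i g, (1 <= i)%N -> Hset i g -> is_stat_policy (pitil i g)) ->
  (forall i g, (1 <= i)%N -> Hset i g ->
    let n : R := 2 ^+ i in
    let al := alpha #|S| #|A| delta n in
    let Vs := Vpi P r g (stat (pistar g)) in
    let Vhs := Vpi (Phat i) r g (stat (pistar g)) in
    let Vht := Vpi (Phat i) r g (stat (pitil i g)) in
    let Vt := Vpi P r g (stat (pitil i g)) in
    let Vhstar := Vstar (Phat i) r g in
    [/\ supnorm (fun s => Vs s - Vhs s)
          <= al / (1 - g) * Num.sqrt ((spnorm Vs + 1) / n),
        (forall s, Vhstar s - n^-1 <= Vht s),
        supnorm (fun s => Vtil i g s - Vhstar s) <= n^-1 &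
        supnorm (fun s => Vht s - Vt s)
          <= al / (1 - g) * Num.sqrt ((spnorm Vht + 1) / n)]) ->
  forall i g, (1 <= i)%N -> Hset i g ->
    let n : R := 2 ^+ i in
    let al := alpha #|S| #|A| delta n in
    let Vt := Vtil i g in
    let Uhat := (1 - g) * vmax Vt + 5 * (1 - g) / n + 2 * al ^+ 2 / ((1 - g) * n)
                + 4 * al * Num.sqrt ((spnorm Vt + 1 + 3 / n) / n) in
    let Lhat := (1 - g) * vmin Vt - 2 * (1 - g) / n
                - al * Num.sqrt ((spnorm Vt + 3 / n + 1) / n) in
    forall s,
      [/\ Lhat <= gain P r (stat (pitil i g)) s,
          gain P r (stat (pitil i g)) s <= rhostar P r s &
          rhostar P r s <= Uhat].
Proof.
move=> hP _ hr _ hPh hstar htil hconc i g hi hH n al Vt Uhat Lhat s.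
have g01 := Hset_discount hH; have /andP[_ g1] := g01.
have n_gt0 : 0 < n by rewrite exprn_gt0.
have al_ge0 : 0 <= al by rewrite alpha_ge0 // ltW.
have c_ge0 : 0 <= al / (1 - g) by rewrite divr_ge0 // subr_ge0 ltW.
have [hps ps_opt] := hstar i g hi hH; have hpt := htil i g hi hH.
have [Vs_close Vht_near Vtil_close Vt_close] := hconc i g hi hH.
have Vhat_le p t : is_stat_policy p -> Vpi (Phat i) r g (stat p) t <= Vstar (Phat i) r g t.
  by move=> hp; have := Vpi_le_Vstar (hPh i) hr t g01 (stat_policy hp).
have Vht_le t := Vhat_le _ t hpt; have Vhs_le t := Vhat_le _ t hps.
have Vt_ge t := evaluated_ge_vmin s n_gt0 c_ge0 Vtil_close t Vht_le Vht_near Vt_close.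
have Vs_ge t : vmin Vt - 2 / n - al / (1 - g) * Num.sqrt ((spnorm Vt + 3 / n + 1) / n)
               <= Vpi P r g (stat (pistar g)) t.
  by rewrite (le_trans (Vt_ge t)) // ps_opt; have := Vpi_le_Vstar hP hr t g01 (stat_policy hpt).
have Vs_le t := optimal_le_vmax s n_gt0 c_ge0 Vtil_close t Vhs_le Vs_close Vs_ge.
split.
- apply: le_trans (gain_stat_ge_vmin hP hr g01 hpt s).
  rewrite /Lhat -discounted_lower_scale //; apply: ler_wpM2l; first by rewrite subr_ge0 ltW.
  exact: vmin_ge s Vt_ge.
- exact/gain_le_rhostar/stat_policy.
- apply: le_trans (rhostar_le_optimal hP hr g01 hps ps_opt s) _.
  rewrite /Uhat [spnorm _ + 1 + _]addrAC.
  apply: le_trans (discounted_upper_scale _ g1 n_gt0 al_ge0 (sqrtr_ge0 _)).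
  apply: ler_wpM2l; first by rewrite subr_ge0 ltW.
  exact: vmax_le s Vs_le.
Qed.
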